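(* Consider an execution of the PermitBFT protocol during a phase of synchronous operation. If round $i$ is unified, its creator $u=v_{i\bmod n}$ is honest, and all honest nodes issue permits for the same position in round $i$, then $u$ creates a block in round $i$.
   Context: PermitBFT protocol. There are $n$ nodes $v_0,\dots,v_{n-1}$; exactly $f<n/3$ are byzantine, the remaining $n-f$ are honest and follow the protocol. A position is a finite set of blocks. A permit is a signed tuple $(r,p)$. A proof for $(r,p)$ is a set of $2f+1$ permits for $(r,p)$ from distinct nodes. A block of round $r$ is signed by the creator $v_{r\bmod n}$ and contains a proof for $(r,p)$. A proposal of round $r$ is a position together with at least $2f+1$ round-$r$ permits from distinct nodes. Honest node: round $:=0$, current $:=\{\text{genesis}\}$; each round with $c=\text{round}\bmod n$: (1) send permit (round, current) to $v_c$; (2) if it is $v_c$: start the creator timeout; once $2f+1$ permits of this round for one position $p$ are held, broadcast a block with this proof at $p$ and stop; if the creator timeout expires first, broadcast a proposal if at least $2f+1$ permits of this round are held, and stop; also stop upon receiving a block, proposal or $2f+1$ timeout messages of a later round; (3) repeat: upon receiving a block or proposal of a round $r'\ge$ round, set round $:=r'$ and current accordingly and go to (4); when the round timeout expires, broadcast timeout(round); if holding $2f+1$ timeout messages for some round $\ge$ round, jump to the largest such round, forward them, go to (4); (4) round $:=$ round$+1$. Synchronous operation: every message between honest nodes is delivered within a known bound $\Delta$, local timers are reliable, local computation takes no time, and $2\Delta<\text{creator timeout}<3\Delta$, $5\Delta<\text{round timeout}$. Let $r_{\max}(t)$ be the maximum round-variable value over honest nodes at time $t$; round $i$ starts at $T_i=\min\{t: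 r_{\max}(t)\ge i\}$; round $i$ is unified if all honest nodes start executing round $i$ within $[T_i,T_i+\Delta]$. *)

From HB Require Import structures.
From mathcomp Require Import all_boot all_order all_algebra.
From mathcomp Require Import reals.
From Stdlib Require List.

Set Implicit Arguments.
Unset Strict Implicit.
Unset Printing Implicit Defensive.

Import Order.TTheory GRing.Theory Num.Theory.
Local Open Scope ring_scope.

Section PermitBFT.

(* n nodes v_0..v_{n-1} (the ordinals 'I_n); f = number of byzantine nodes;
   P = type of positions (finite sets of blocks, kept abstract). *)
Variables (n f : nat) (P : Type).

Definition node := 'I_n.

(* Every component carries the signature of the indicated node.
   - Permit w r p           : permit (r,p) signed by w
   - Block c r p prf        : block of round r signed by its creator c, with the
                              proof prf = list of signers of permits for (r,p)
   - Proposal c r q ps      : proposal of round r signed by c, with position q and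
                              the round-r permits ps (signer, permitted position)
   - Timeout w r            : timeout(r) message signed by w *)
Inductive msg :=
| Permit of node & nat & P
| Block of node & nat & P & seq node
| Proposal of node & nat & P & seq (node * P)
| Timeout of node & nat.

Definition is_creator (u : node) (r : nat) : bool := (nat_of_ord u == r %% n)%N.

Definition msg_round (m : msg) : nat :=
  match m with
  | Permit _ r _ | Block _ r _ _ | Proposal _ r _ _ | Timeout _ r => r
  end.

Definition is_block_or_proposal (m : msg) : bool :=
  match m with Block _ _ _ _ | Proposal _ _ _ _ => true | _ => false end.

Definition valid_msg (m : msg) : Prop :=
  match m with
  | Block c r _ prf => is_creator c r /\ uniq prf /\ (2 * f + 1 <= size prf)%N
  | Proposal c r _ ps =>
      is_creator c r /\ uniq (map fst ps) /\ (2 * f + 1 <= size ps)%N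
  | _ => True
  end.

Definition signed_part (w : node) (c m : msg) : Prop :=
  match m with
  | Permit x _ _ => w = x /\ c = m
  | Timeout x _ => w = x /\ c = m
  | Block x r p prf => (w = x /\ c = m) \/ (w \in prf /\ c = Permit w r p)
  | Proposal x r _ ps =>
      (w = x /\ c = m) \/ (exists p, List.In (w, p) ps /\ c = Permit w r p)
  end.

Section Time.

Variable R : realType.   (* real time *)

(* A trace of an execution:
   - send w x m t  : node w sends message m to node x at time t
                     (a broadcast is a send to every node);
   - recv x m t    : node x receives (signature-verified) message m at time t;
   - start w r p t : node w starts executing round r, with current = p, at time t
                     (this is the moment its round variable becomes r). *)
Record trace := Trace {
  send : node -> node -> msg -> R -> Prop;
  recv : node -> msg -> R -> Prop;
  start : node -> nat -> P -> R -> Prop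
}.

Variables (tr : trace) (honest : {set node}).
(* Delta = delivery bound, ct = creator timeout, rt = round timeout,
   [ts, te] = the phase of synchronous operation. *)
Variables (Delta ct rt ts te : R).

Definition in_phase (t : R) := ts <= t <= te.

Definition holds_permits (u : node) (r : nat) (p : P) (t : R) : Prop :=
  exists S : {set node}, (2 * f + 1 <= #|S|)%N /\
    forall w, w \in S -> exists t', t' <= t /\ recv tr u (Permit w r p) t'.

(* By time t the creator u of round r has a reason to stop step (2):
   it received a block or proposal of a later round, or timeout messages of
   later rounds from 2f+1 distinct nodes, or it already left round r. *)
Definition stopped (u : node) (r : nat) (t : R) : Prop :=
  (exists m t', t' <= t /\ recv tr u m t' /\ valid_msg m /\
     is_block_or_proposal m /\ (r < msg_round m)%N)
  \/ (exists S : {set node}, (2 * f + 1 <= #|S|)%N /\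
        forall x, x \in S -> exists r' t', (r < r')%N /\ t' <= t /\
          recv tr u (Timeout x r') t')
  \/ (exists r' q t', (r < r')%N /\ t' <= t /\ start tr u r' q t').

(* Honest nodes follow the protocol; byzantine nodes are unconstrained except
   that they cannot forge signatures of honest nodes. *)
Record protocol_execution : Prop := {
  start_uniq : forall w r p p' s s', w \in honest ->
    start tr w r p s -> start tr w r p' s' -> p = p' /\ s = s';
  start_mono : forall w r r' p p' s s', w \in honest ->
    start tr w r p s -> start tr w r' p' s' -> (r < r')%N -> s <= s';
  start_trigger : forall w r p s, w \in honest -> start tr w r p s ->
    r = 0%N
    \/ (exists m t', t' <= s /\ recv tr w m t' /\ valid_msg m /\
          is_block_or_proposal m /\ (msg_round m).+1 = r)
    \/ (exists r', r = r'.+1 /\ exists S : {set node},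
          (2 * f + 1 <= #|S|)%N /\
          forall x, x \in S -> exists t', t' <= s /\ recv tr w (Timeout x r') t');
  (* step (1): upon starting round r, send permit (r, current) to v_{r mod n}
     (instantly, when in the synchronous phase) *)
  permit_on_start : forall w r p s, w \in honest -> start tr w r p s ->
    exists t, s <= t /\ (in_phase s -> t = s) /\
      forall x, is_creator x r -> send tr w x (Permit w r p) t;
  permit_only : forall w x w' r p t, w \in honest ->
    send tr w x (Permit w' r p) t ->
    w' = w /\ is_creator x r /\ exists s, s <= t /\ start tr w r p s;
  block_only : forall w x c r p prf t, w \in honest ->
    send tr w x (Block c r p prf) t ->
    [/\ c = w, valid_msg (Block c r p prf),
        (exists q s, s <= t /\ start tr w r q s) &
        forall y, send tr w y (Block c r p prf) t];
  (* honest nodes create proposals only as creators, after the creator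
     timeout expired (timers are reliable in the synchronous phase) *)
  proposal_only : forall w x c r q ps t, w \in honest ->
    send tr w x (Proposal c r q ps) t ->
    c = w /\ is_creator w r /\
    exists q' s, s <= t /\ start tr w r q' s /\ (ts <= s -> t <= te -> s + ct <= t);
  timeout_only : forall w x r t, w \in honest ->
    send tr w x (Timeout w r) t ->
    exists q s, s <= t /\ start tr w r q s /\ (ts <= s -> t <= te -> s + rt <= t);
  timeout_forward : forall w x w' r t, w \in honest -> w' != w ->
    send tr w x (Timeout w' r) t -> exists t', t' <= t /\ recv tr w (Timeout w' r) t';
  creator_rule : forall u r q s t p, u \in honest -> start tr u r q s ->
    is_creator u r -> ts <= s -> t <= te -> s <= t -> t < s + ct ->
    holds_permits u r p t -> ~ stopped u r t ->
    exists t'' p' prf, [/\ s <= t'' <= t, valid_msg (Block u r p' prf),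
      (forall w, w \in prf -> exists t', t' <= t'' /\ recv tr u (Permit w r p') t') &
      forall x, send tr u x (Block u r p' prf) t''];
  synchrony : forall w x m t, w \in honest -> x \in honest ->
    send tr w x m t -> in_phase t ->
    exists t', t <= t' <= t + Delta /\ recv tr x m t';
  authenticity : forall x m t w c, x \in honest -> w \in honest ->
    recv tr x m t -> signed_part w c m ->
    exists y t', t' <= t /\ send tr w y c t'
}.

(* r_max(t) >= i : some honest node has round variable >= i at time t *)
Definition rmax_ge (t : R) (i : nat) : Prop :=
  exists w r p s, [/\ w \in honest, (i <= r)%N, s <= t & start tr w r p s].

Definition round_start_time (i : nat) (T : R) : Prop :=
  rmax_ge T i /\ forall t, rmax_ge t i -> T <= t.

Definition unified (i : nat) (T : R) : Prop :=
  round_start_time i T /\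
  forall w, w \in honest -> exists p s, start tr w i p s /\ T <= s <= T + Delta.

Definition same_permit_position (i : nat) : Prop :=
  exists p, forall w x q t, w \in honest -> send tr w x (Permit w i q) t -> q = p.

Definition creates_block (u : node) (i : nat) : Prop :=
  exists t p prf, valid_msg (Block u i p prf) /\
    forall x, send tr u x (Block u i p prf) t.

End Time.
End PermitBFT.

From HB Require Import structures.
From mathcomp Require Import all_boot all_order all_algebra.
From mathcomp Require Import reals lra zify.
From Stdlib Require Import Classical.
Import Order.TTheory GRing.Theory Num.Theory.

Set Implicit Arguments.
Unset Strict Implicit.
Unset Printing Implicit Defensive.

Local Open Scope ring_scope.

(* Proof: let t := T + 2 Delta.  Every honest node starts round i by T + Delta
   and sends its permit for the common position p to u, which therefore holds
   2f+1 such permits at t, well before its creator timeout expires at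
   T + ct > t.  So by the creator rule u has broadcast a block unless it was
   stopped by t.  Any reason to stop is backed, through the honest signer that
   every quorum contains, by an honest node that started some round r > i by
   t, hence (going down one round at a time) round i+1 by t.  An honest node
   leaves round i by t only on a block of u, which is what we want: a proposal
   of u is sent no earlier than T + ct > t, and an honest timeout(i) no earlier
   than T + rt > t. *)

Lemma honest_quorum (n f : nat) (honest : {set 'I_n}) :
  (3 * f < n)%N -> #|honest| = (n - f)%N -> (2 * f + 1 <= #|honest|)%N.
Proof. by move=> f_lt ->; lia. Qed.

Lemma quorum_has_honest (n f : nat) (honest S : {set 'I_n}) :
  (3 * f < n)%N -> #|honest| = (n - f)%N -> (2 * f + 1 <= #|S|)%N ->
  exists2 w, w \in S & w \in honest.
Proof.
move=> f_lt honest_card S_quorum.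
have := cardsUI S honest; have := max_card (S :|: honest); rewrite card_ord.
move=> union_le union_inter.
have /card_gt0P[w] : (0 < #|S :&: honest|)%N by lia.
by rewrite inE => /andP[wS w_honest]; exists w.
Qed.

Lemma uniq_quorum_has_honest (n f : nat) (honest : {set 'I_n}) (s : seq 'I_n) :
  (3 * f < n)%N -> #|honest| = (n - f)%N -> uniq s -> (2 * f + 1 <= size s)%N ->
  exists2 w, w \in s & w \in honest.
Proof.
move=> f_lt honest_card s_uniq s_quorum.
have [|w] := quorum_has_honest (S := [set x in s]) f_lt honest_card.
  by rewrite cardsE (card_uniqP s_uniq).
by rewrite inE; exists w.
Qed.

Lemma in_map_fst (A : eqType) (B : Type) (a : A) (s : seq (A * B)) :
  a \in map fst s -> exists b, List.In (a, b) s.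
Proof.
elim: s => //= [[x b] s IHs]; rewrite inE => /orP[/eqP -> | /IHs[b' ab's]].
  by exists b; left.
by exists b'; right.
Qed.

Section Execution.

Variables (n f : nat) (P : Type) (R : realType) (tr : trace n P R).
Variables (honest : {set 'I_n}) (Delta ct rt ts te : R).
Hypothesis exec : protocol_execution f tr honest Delta ct rt ts te.
Hypothesis f_lt : (3 * f < n)%N.
Hypothesis honest_card : #|honest| = (n - f)%N.

Lemma recv_block_or_proposal_started x m t :
  x \in honest -> recv tr x m t -> valid_msg f m -> is_block_or_proposal m ->
  exists w q s, [/\ w \in honest, s <= t & start tr w (msg_round m) q s].
Proof.
move=> x_honest recv_m.
have started_of_permit w r p : w \in honest ->
    signed_part w (Permit w r p) m ->
    exists w q s, [/\ w \in honest, s <= t & start tr w r q s].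
  move=> w_honest signed.
  have [y [t' [le_t't send_permit]]] :=
    authenticity exec x_honest w_honest recv_m signed.
  have [_ [_ [s [le_st' start_w]]]] := permit_only exec w_honest send_permit.
  by exists w, p, s; split; rewrite ?(le_trans le_st').
case: m recv_m started_of_permit => [//|c r p prf|c r p ps|//] recv_m
  started_of_permit /= [_ [uniq_signers quorum]] _.
  have [w w_prf w_honest] :=
    uniq_quorum_has_honest f_lt honest_card uniq_signers quorum.
  exact: (started_of_permit w r p w_honest (or_intror (conj w_prf erefl))).
rewrite -(size_map fst) in quorum.
have [w w_ps w_honest] :=
  uniq_quorum_has_honest f_lt honest_card uniq_signers quorum.
have [p' w_p'] := in_map_fst w_ps.
exact: (started_of_permit w r p' w_honest
  (or_intror (ex_intro _ p' (conj w_p' erefl)))).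
Qed.

Lemma recv_timeout_started x w r t :
  x \in honest -> w \in honest -> recv tr x (Timeout P w r) t ->
  exists q s t', [/\ s <= t', t' <= t, start tr w r q s &
                     (ts <= s -> t' <= te -> s + rt <= t')].
Proof.
move=> x_honest w_honest recv_timeout.
have [y [t' [le_t't send_timeout]]] :=
  authenticity exec x_honest w_honest recv_timeout (conj erefl erefl).
have [q [s [le_st' [start_w timer]]]] := timeout_only exec w_honest send_timeout.
by exists q, s, t'.
Qed.

Lemma recv_quorum_timeout_started x r t (S : {set 'I_n}) :
  x \in honest -> (2 * f + 1 <= #|S|)%N ->
  (forall w, w \in S -> exists t', t' <= t /\ recv tr x (Timeout P w r) t') ->
  exists w q s t', [/\ w \in honest, s <= t', t' <= t, start tr w r q s &
                       (ts <= s -> t' <= te -> s + rt <= t')].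
Proof.
move=> x_honest S_quorum recv_S.
have [w wS w_honest] := quorum_has_honest f_lt honest_card S_quorum.
have [t1 [le_t1t recv_w]] := recv_S w wS.
have [q [s [t' [le_st' le_t't1 start_w timer]]]] :=
  recv_timeout_started x_honest w_honest recv_w.
by exists w, q, s, t'; split => //; apply: le_trans le_t1t.
Qed.

Lemma start_succ_started w r q s :
  w \in honest -> start tr w r.+1 q s ->
  exists w' q' s', [/\ w' \in honest, s' <= s & start tr w' r q' s'].
Proof.
move=> w_honest start_w.
case: (start_trigger exec w_honest start_w) =>
  [//|[[m [t [le_ts [recv_m [valid_m [kind_m [round_m]]]]]]]
     |[_ [[<-] [S [S_quorum recv_S]]]]]].
  have [w' [q' [s' [w'_honest le_s't]]]] :=
    recv_block_or_proposal_started w_honest recv_m valid_m kind_m.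
  by rewrite round_m => start_w'; exists w', q', s'; split; rewrite ?(le_trans le_s't).
have [w' [q' [s' [t' [w'_honest le_s't' le_t's start_w' _]]]]] :=
  recv_quorum_timeout_started w_honest S_quorum recv_S.
by exists w', q', s'; split; rewrite ?(le_trans le_s't').
Qed.

Lemma start_started_le k w r q s :
  (k <= r)%N -> w \in honest -> start tr w r q s ->
  exists w' q' s', [/\ w' \in honest, s' <= s & start tr w' k q' s'].
Proof.
elim: r w q s => [|r IHr] w q s.
  by rewrite leqn0 => /eqP-> w_honest start_w; exists w, q, s.
rewrite leq_eqVlt ltnS => /orP[/eqP-> w_honest start_w|le_kr w_honest start_w].
  by exists w, q, s.
have [w1 [q1 [s1 [w1_honest le_s1s start_w1]]]] := start_succ_started w_honest start_w.
have [w' [q' [s' [w'_honest le_s's1 start_w']]]] := IHr _ _ _ le_kr w1_honest start_w1.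
by exists w', q', s'; split; rewrite ?(le_trans le_s's1).
Qed.

Section Round.

Variables (i : nat) (T : R) (u : 'I_n).
Hypothesis round_start : round_start_time tr honest i T.
Hypotheses (phase_start : ts <= T) (phase_end : T + 2 * Delta <= te).
Hypotheses (u_creator : is_creator u i) (u_honest : u \in honest).
Hypotheses (ct_gt : 2 * Delta < ct) (rt_gt : 2 * Delta < rt).

Lemma start_ge_round_start w r q s :
  w \in honest -> (i <= r)%N -> start tr w r q s -> T <= s.
Proof. by move=> w_honest le_ir start_w; apply: round_start.2; exists w, r, q, s. Qed.

Lemma creator_of_round c : is_creator c i -> c = u.
Proof. by move=> /eqP c_val; apply: ord_inj; rewrite c_val; apply/esym/eqP. Qed.

Lemma timer_not_expired s d t :
  T <= s -> 2 * Delta < d -> t <= T + 2 * Delta ->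
  ~ (ts <= s -> t <= te -> s + d <= t).
Proof.
move=> le_Ts lt_d le_t /(_ (le_trans phase_start le_Ts) (le_trans le_t phase_end)).
by rewrite leNgt (le_lt_trans le_t) // ler_ltD.
Qed.

Lemma early_succ_start_creates_block w q s :
  w \in honest -> start tr w i.+1 q s -> s <= T + 2 * Delta ->
  creates_block f tr u i.
Proof.
move=> w_honest start_w le_s.
case: (start_trigger exec w_honest start_w) =>
  [//|[[m [t [le_ts [recv_m [valid_m [kind_m [round_m]]]]]]]
     |[_ [[<-] [S [S_quorum recv_S]]]]]].
  case: m round_m recv_m valid_m kind_m => [//|c r p prf|c r p ps|//] /= -> recv_m
    [/creator_of_round c_u _] _; subst c.
    have [y [t' [_ send_block]]] :=
      authenticity exec w_honest u_honest recv_m (or_introl (conj erefl erefl)).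
    have [_ valid_block _ broadcast] := block_only exec u_honest send_block.
    by exists t', p, prf.
  have [y [t' [le_t't send_proposal]]] :=
    authenticity exec w_honest u_honest recv_m (or_introl (conj erefl erefl)).
  have [_ [_ [q' [s' [_ [start_u timer]]]]]] := proposal_only exec u_honest send_proposal.
  have le_Ts' := start_ge_round_start u_honest (leqnn i) start_u.
  exfalso; apply: timer_not_expired le_Ts' ct_gt _ timer.
  by rewrite (le_trans le_t't) ?(le_trans le_ts).
have [w' [q' [s' [t' [w'_honest _ le_t's start_w' timer]]]]] :=
  recv_quorum_timeout_started w_honest S_quorum recv_S.
have le_Ts' := start_ge_round_start w'_honest (leqnn i) start_w'.
exfalso; apply: timer_not_expired le_Ts' rt_gt _ timer.
by rewrite (le_trans le_t's).
Qed.

Lemma early_later_start_creates_block w r q s :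
  (i < r)%N -> w \in honest -> start tr w r q s -> s <= T + 2 * Delta ->
  creates_block f tr u i.
Proof.
move=> lt_ir w_honest start_w le_s.
have [w' [q' [s' [w'_honest le_s's start_w']]]] := start_started_le lt_ir w_honest start_w.
exact: early_succ_start_creates_block w'_honest start_w' (le_trans le_s's le_s).
Qed.

Lemma stopped_early_creates_block :
  stopped f tr u i (T + 2 * Delta) -> creates_block f tr u i.
Proof.
move=> [[m [t [le_t [recv_m [valid_m [kind_m lt_i]]]]]]
       |[[S [S_quorum recv_S]]|[r [q [t [lt_ir [le_t start_u]]]]]]].
- have [w [q [s [w_honest le_st start_w]]]] :=
    recv_block_or_proposal_started u_honest recv_m valid_m kind_m.
  exact: early_later_start_creates_block lt_i w_honest start_w (le_trans le_st le_t).
- have [w wS w_honest] := quorum_has_honest f_lt honest_card S_quorum.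
  have [r [t [lt_ir [le_t recv_w]]]] := recv_S w wS.
  have [q [s [t' [le_st' le_t't start_w _]]]] :=
    recv_timeout_started u_honest w_honest recv_w.
  apply: early_later_start_creates_block lt_ir w_honest start_w _.
  by rewrite (le_trans le_st') ?(le_trans le_t't).
- exact: early_later_start_creates_block lt_ir u_honest start_u le_t.
Qed.

Lemma unified_holds_permits p :
  0 < Delta -> unified tr honest Delta i T ->
  (forall w x q t, w \in honest -> send tr w x (Permit w i q) t -> q = p) ->
  holds_permits f tr u i p (T + 2 * Delta).
Proof.
move=> Delta_gt0 [_ unified_i] same_p.
exists honest; split; first exact: honest_quorum f_lt honest_card.
move=> w w_honest.
have [q [s [start_w /andP[le_Ts le_s]]]] := unified_i w w_honest.
have two_Delta : T + 2 * Delta = T + Delta + Delta by rewrite mulr_natl mulr2n addrA.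
have s_in_phase : in_phase ts te s.
  apply/andP; split; first exact: le_trans le_Ts.
  by rewrite (le_trans le_s) // (le_trans _ phase_end) // two_Delta lerDl ltW.
have [t [_ [/(_ s_in_phase) -> send_permit]]] := permit_on_start exec w_honest start_w.
have send_u := send_permit u u_creator.
have q_p := same_p _ _ _ _ w_honest send_u; subst q.
have [t' [/andP[_ le_t'] recv_permit]] := synchrony exec w_honest u_honest send_u s_in_phase.
by exists t'; rewrite (le_trans le_t') // two_Delta lerD2r.
Qed.

End Round.

End Execution.

Theorem corollary3 (n f : nat) (P : Type) (R : realType)
    (tr : trace n P R) (honest : {set 'I_n}) (Delta ct rt ts te : R)
    (i : nat) (T : R) (u : 'I_n) :
  (3 * f < n)%N ->
  #|honest| = (n - f)%N ->
  0 < Delta -> 2 * Delta < ct -> ct < 3 * Delta -> 5 * Delta < rt ->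
  protocol_execution f tr honest Delta ct rt ts te ->
  (* round i lies in the phase of synchronous operation [ts, te] *)
  ts <= T -> T + 2 * Delta <= te ->
  unified tr honest Delta i T ->
  is_creator u i -> u \in honest ->
  same_permit_position tr honest i ->
  creates_block f tr u i.
Proof.
move=> f_lt honest_card Delta_gt0 ct_gt _ rt_gt exec phase_start phase_end
  unified_i u_creator u_honest [p same_p].
have rt_gt' : 2 * Delta < rt by lra.
have [round_start unified_starts] := unified_i.
have [q [s [start_u /andP[le_Ts le_s]]]] := unified_starts u u_honest.
have [|not_stopped] := classic (stopped f tr u i (T + 2 * Delta)).
  exact: (stopped_early_creates_block exec f_lt honest_card round_start
    phase_start phase_end u_creator u_honest ct_gt rt_gt').
have holds := unified_holds_permits exec f_lt honest_card phase_start phase_end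
  u_creator u_honest Delta_gt0 unified_i same_p.
have [|||t [p' [prf [_ valid_block _ broadcast]]]] :=
  creator_rule exec u_honest start_u u_creator _ phase_end _ _ holds not_stopped.
- exact: le_trans le_Ts.
- lra.
- lra.
by exists t, p', prf.
Qed.
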